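(* Let $q\ge2$, $t\ge1$, $b\ge1$, $n\ge bt+1$. Then for every $\sigma\in\Sigma_q$, \[ |\mathcal{D}_{t,b}(\boldsymbol{X}^{\sigma}_{n,q,b})|=D_{q,b}(n,t)=\sum_{i=0}^{t}\binom{n-bt}{i}\,d_{q-1,1}(t,t-i). \] In particular, $D_{2,b}(n,t)=\sum_{i=0}^{t}\binom{n-bt}{i}$.
   Context: $\Sigma_q=\{0,\ldots,q-1\}$. A $b$-burst-deletion at position $i\in[1,n-b+1]$ transforms $x_1\cdots x_n$ into $x_1\cdots x_{i-1}x_{i+b}\cdots x_n$. For $n\ge tb+1$ (and $t\ge0$), $\mathcal{D}_{t,b}(\boldsymbol{x})$ is the set of all length-$(n-tb)$ sequences obtainable from $\boldsymbol{x}$ by $t$ successive $b$-burst-deletions ($\mathcal{D}_{0,b}(\boldsymbol{x})=\{\boldsymbol{x}\}$). $D_{q,b}(n,t)=\max\{|\mathcal{D}_{t,b}(\boldsymbol{x})|:\boldsymbol{x}\in\Sigma_q^n\}$. For an alphabet size $q'\ge1$, $\sigma\in\Sigma_{q'}$ and $m\ge1$, the $b$-cyclic sequence $\boldsymbol{X}^{\sigma}_{m,q',b}=X_1\cdots X_m$ has $X_i\equiv\sigma+\lfloor (i-1)/b\rfloor\pmod{q'}$ (for $q'=1$ this is $0^m$). For $m\ge bs+1$, $s\ge 0$, $d_{q',b}(m,s):=|\mathcal{D}_{s,b}(\boldsymbol{X}^{0}_{m,q',b})|$; also $d_{q',b}(m,s)=1$ if $m=bs\ge0$, and $d_{q',b}(m,s)=0$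 if $m<bs$ or $s<0$. In particular $d_{q-1,1}(t,t-i)$ is the number of distinct subsequences of length $i$ of the cyclic sequence $\boldsymbol{X}^0_{t,q-1,1}$ (and equals $1$ when $q=2$). Convention: $\binom{m}{i}=0$ if $m<i$. *)

(* Sequences over Sigma_q are represented as seq nat
   (entries < q); positions are 0-indexed. *)
From mathcomp Require Import all_boot.
Set Implicit Arguments. Unset Strict Implicit. Unset Printing Implicit Defensive.

Definition burst_del (b i : nat) (x : seq nat) : seq nat :=
  take i x ++ drop (i + b) x.

(* The set D_{t,b}(x), as a duplicate-free list: all results of t successive
   b-burst-deletions (each at a valid position 0 <= i <= |x| - b). *)
Fixpoint Dlist (t b : nat) (x : seq nat) : seq (seq nat) :=
  match t with
  | 0 => [:: x]
  | t'.+1 =>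
      if b <= size x then
        undup (flatten [seq Dlist t' b (burst_del b i x) | i <- iota 0 (size x - b).+1])
      else [::]
  end.

Definition Dcard (t b : nat) (x : seq nat) : nat := size (Dlist t b x).

Definition Dmax (q b n t : nat) : nat :=
  \max_(x : n.-tuple 'I_q) Dcard t b (map (@nat_of_ord q) x).

(* b-cyclic sequence X^sigma_{m,q',b}: X_i = sigma + floor((i-1)/b) mod q'
   (1-indexed i; here 0-indexed j = i-1). *)
Definition Xcyc (sigma m q' b : nat) : seq nat :=
  mkseq (fun j => (sigma + j %/ b) %% q') m.

Definition dcyc (q' b m s : nat) : nat :=
  if m < b * s then 0
  else if m == b * s then 1
  else Dcard s b (Xcyc 0 m q' b).

From mathcomp Require Import all_boot zify.
Set Implicit Arguments. Unset Strict Implicit. Unset Printing Implicit Defensive.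

(** The first symbol of a word of D_{t,b}(x) can always be read at one of the
    positions 0, b, ..., tb of x, and taking the earliest such position makes the
    decomposition unique: |D_{t,b}(x)| is the sum, over the positions kb whose
    symbol did not occur at an earlier multiple of b, of |D_{t-k,b}| of the tail
    after kb.  At most q of these positions are "new" and the summands decrease
    with k, so induction on n - bt bounds |D_{t,b}(x)| by the solution of a
    recursion ([dcyc_rec]).  A b-cyclic word attains the bound: its first q
    positions kb carry distinct symbols and its tails are again b-cyclic, up to a
    phase.  Unfolding the recursion once in the alphabet size yields the binomial
    formula, whose coefficients are the same recursion for q - 1 and b = 1. *)

Lemma size_burst_del b i x : i + b <= size x -> size (burst_del b i x) = size x - b.
Proof. by move=> ibx; rewrite /burst_del size_cat size_takel ?size_drop; lia. Qed.

Lemma nth_burst_del b i j x : i + b <= size x ->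
  nth 0 (burst_del b i x) j = nth 0 x (if j < i then j else j + b).
Proof.
move=> ibx; rewrite /burst_del nth_cat size_takel; last by lia.
by case: ltnP => [ji | ij]; rewrite ?nth_take ?nth_drop //; congr nth; lia.
Qed.

Lemma drop_burst_del_ge b i j x : i + b <= size x -> i <= j ->
  drop j (burst_del b i x) = drop (j + b) x.
Proof.
move=> ibx ij; rewrite /burst_del drop_cat size_takel; last by lia.
by rewrite ltnNge ij /= drop_drop; congr drop; lia.
Qed.

Lemma drop_burst_del_le b i j x : i + b <= size x -> j <= i ->
  drop j (burst_del b i x) = burst_del b (i - j) (drop j x).
Proof.
move=> ibx ji; rewrite /burst_del drop_cat size_takel; last by lia.
case: (ltnP j i) => [{}ji | ij].
  by rewrite take_drop subnK 1?ltnW // drop_drop; congr (_ ++ drop _ _); lia.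
have -> : i = j by lia.
by rewrite subnn take0 !add0n drop0 drop_drop addnC.
Qed.

Lemma Dlist_uniq t b x : uniq (Dlist t b x).
Proof. by case: t => //= t; case: ifP => // _; apply: undup_uniq. Qed.

Lemma DlistSP s b x y : reflect
  (exists2 i, i + b <= size x & y \in Dlist s b (burst_del b i x))
  (y \in Dlist s.+1 b x).
Proof.
cbn [Dlist]; case: ifP => bx; last first.
  by apply: (iffP idP) => // -[i ibx _]; move: bx; lia.
rewrite mem_undup; apply: (iffP flattenP) => [[_ /mapP [i + ->] yD] | [i ibx yD]].
  by rewrite mem_iota => iP; exists i => //; lia.
by exists (Dlist s b (burst_del b i x)) => //; apply/mapP; exists i; rewrite ?mem_iota //; lia.
Qed.

Lemma size_Dlist s b x y : y \in Dlist s b x -> size y + b * s = size x.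
Proof.
elim: s x y => [|s IH] x y; first by rewrite mem_seq1 => /eqP ->; rewrite muln0 addn0.
by case/DlistSP=> i ibx /IH; rewrite size_burst_del // mulnS; lia.
Qed.

Lemma cons_Dlist s b x y c : y \in Dlist s b x -> c :: y \in Dlist s b (c :: x).
Proof.
elim: s x y => [|s IH] x y; first by rewrite !mem_seq1 => /eqP ->.
case/DlistSP=> i ibx /(IH _ _) cyD; apply/DlistSP; exists i.+1 => //=; lia.
Qed.

Lemma Dlist_drop j s b x y : j * b <= size x ->
  y \in Dlist s b (drop (j * b) x) -> y \in Dlist (s + j) b x.
Proof.
elim: j s y => [|j IH] s y; first by rewrite mul0n drop0 addn0.
rewrite mulSn addnS -addSn => jbx; rewrite -drop_drop => yD; apply: IH; first by lia.
by apply/DlistSP; exists 0; rewrite /burst_del ?take0 ?size_drop //; nia.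
Qed.

Lemma Dcard_full s b x : size x = b * s -> Dcard s b x = 1.
Proof.
move=> xbs; have: drop (s * b) x \in Dlist s b x.
  by rewrite -[s]add0n; apply: Dlist_drop; rewrite ?mem_seq1 //; lia.
have: {subset Dlist s b x <= [:: [::]]}.
  move=> y /size_Dlist; rewrite xbs mem_seq1; case: y => //= *; lia.
move/(uniq_leq_size (Dlist_uniq s b x)); rewrite /Dcard.
by case: (Dlist s b x) => //= ? [].
Qed.

Lemma cons_DlistP t b x c y : reflect
  (exists k, [/\ k <= t, k * b < size x, nth 0 x (k * b) = c
                & y \in Dlist (t - k) b (drop (k * b).+1 x)])
  (c :: y \in Dlist t b x).
Proof.
apply: (iffP idP) => [|[k [kt kbx <- yD]]]; last first.
  move: yD => /(cons_Dlist (nth 0 x (k * b))); rewrite -drop_nth // => /Dlist_drop.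
  by rewrite subnK //; apply; lia.
elim: t x => [|t IH] x.
  by rewrite mem_seq1 => /eqP <-; exists 0; rewrite mul0n /= drop0 mem_seq1.
case/DlistSP=> i ibx /IH [k [kt]]; rewrite size_burst_del // nth_burst_del //.
case: (leqP i (k * b)) => [ik | ki] kbx <- yD.
  exists k.+1; split; rewrite ?mulSn 1?addnC //; first lia.
  by move: yD; rewrite drop_burst_del_ge //; last lia; rewrite subSS addSn.
exists k; split; [lia | lia | by [] |].
rewrite subSn //; apply/DlistSP; exists (i - (k * b).+1); first by rewrite size_drop; lia.
by rewrite -drop_burst_del_le.
Qed.

Lemma Dlist_tail_mono t b x y j k : j <= k -> k <= t -> k * b < size x ->
  y \in Dlist (t - k) b (drop (k * b).+1 x) -> y \in Dlist (t - j) b (drop (j * b).+1 x).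
Proof.
move=> jk kt kbx; have jbk : j * b <= k * b by rewrite leq_mul2r jk orbT.
have -> : drop (k * b).+1 x = drop ((k - j) * b) (drop (j * b).+1 x).
  by rewrite drop_drop mulnBl; congr drop; lia.
move/Dlist_drop; rewrite size_drop mulnBl; have -> : t - k + (k - j) = t - j by lia.
by apply; lia.
Qed.

Definition first_occ (x : seq nat) b k :=
  nth 0 x (k * b) \notin [seq nth 0 x (j * b) | j <- iota 0 k].

Lemma uniq_flatten_map_cons (I T : eqType) (s : seq I) (f : I -> T)
    (g : I -> seq (seq T)) :
  uniq (map f s) -> (forall k, uniq (g k)) ->
  uniq (flatten [seq map (cons (f k)) (g k) | k <- s]).
Proof.
move=> + g_uniq; elim: s => //= k s IH /andP [fks fs].
rewrite cat_uniq map_inj_uniq ?g_uniq ?IH //=; last by move=> ? ? [].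
rewrite andbT; apply/hasPn => _ /flattenP [_ /mapP [k' k's ->] /mapP [? _ ->]].
by apply/mapP => -[? _ [fk _]]; move: fks; rewrite -fk map_f.
Qed.

Lemma uniq_first_occ x b n :
  uniq [seq nth 0 x (k * b) | k <- [seq k <- iota 0 n | first_occ x b k]].
Proof.
rewrite map_inj_in_uniq ?filter_uniq ?iota_uniq // => k1 k2.
rewrite !mem_filter !mem_iota /first_occ => /andP [k1new _] /andP [k2new _] eqx.
case: (ltngtP k1 k2) => // k12.
  by case/negP: k2new; rewrite -eqx; apply/mapP; exists k1; rewrite ?mem_iota.
by case/negP: k1new; rewrite eqx; apply/mapP; exists k2; rewrite ?mem_iota.
Qed.

Lemma Dlist_first_occ t b x : b * t < size x ->
  Dlist t b x =i
  flatten [seq map (cons (nth 0 x (k * b))) (Dlist (t - k) b (drop (k * b).+1 x))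
          | k <- [seq k <- iota 0 t.+1 | first_occ x b k]].
Proof.
move=> btx y; apply/idP/flattenP => [yD | [_ /mapP [k] + -> /mapP [y' y'D ->]]]; last first.
  rewrite mem_filter mem_iota => /andP [_ kt]; apply/cons_DlistP; exists k; split => //.
  by apply: leq_ltn_trans btx; rewrite mulnC leq_mul2l; lia.
case: y yD (size_Dlist yD) => [_ /= | c y /cons_DlistP [k [kt kbx xk yD]] _]; first lia.
pose P j := (j <= t) && (nth 0 x (j * b) == c).
have [|j /andP [jt /eqP xj] j_min] := ex_minnP (P := P).
  by exists k; rewrite /P kt xk eqxx.
exists (map (cons c) (Dlist (t - j) b (drop (j * b).+1 x))).
  apply/mapP; exists j; rewrite ?xj // mem_filter mem_iota /= ltnS jt andbT.
  rewrite /first_occ; apply/negP => /mapP [i]; rewrite mem_iota => /andP [_ ij] xij.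
  by have := j_min i; rewrite /P -xij xj eqxx andbT; lia.
by rewrite map_f // (Dlist_tail_mono (j_min k _)) // /P kt xk eqxx.
Qed.

Lemma Dcard_first_occ t b x : b * t < size x ->
  Dcard t b x =
  \sum_(k <- iota 0 t.+1 | first_occ x b k) Dcard (t - k) b (drop (k * b).+1 x).
Proof.
move=> btx; rewrite /Dcard.
rewrite (perm_size (uniq_perm (Dlist_uniq t b x) _ (Dlist_first_occ btx))).
  rewrite size_flatten /shape -map_comp sumnE big_map big_filter.
  by under eq_bigr do rewrite /= size_map.
by apply: uniq_flatten_map_cons (uniq_first_occ _ _ _) _ => k; apply: Dlist_uniq.
Qed.

(* [dcyc_rec Q m t] = d_{Q,b}(bt + m, t) for every b > 0, by [Dcard_Xcyc_off]. *)
Fixpoint dcyc_rec (Q m t : nat) : nat :=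
  if m is m'.+1 then \sum_(k < minn Q t.+1) dcyc_rec Q m' (t - k) else 1.

Lemma dcyc_recS Q m t : dcyc_rec Q m.+1 t = \sum_(k < minn Q t.+1) dcyc_rec Q m (t - k).
Proof. by []. Qed.

Lemma leq_sum_ord_widen n1 n2 (F : nat -> nat) :
  n1 <= n2 -> \sum_(k < n1) F k <= \sum_(k < n2) F k.
Proof.
move=> n12; rewrite (big_ord_widen n2 F n12).
exact: (sub_le_big leqnn (fun a b => leq_addr b a)).
Qed.

Lemma dcyc_rec_homo Q m : {homo dcyc_rec Q m : s s' / s <= s'}.
Proof.
elim: m => [|m IH]; first by [].
apply: (homo_leq leqnn leq_trans) => s.
rewrite !dcyc_recS.
apply: (leq_trans _ (@leq_sum_ord_widen _ _ (fun k => dcyc_rec Q m (s.+1 - k)) _)).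
- by apply: leq_sum => k _; apply: IH; rewrite subSn //; have := ltn_ord k; lia.
- by rewrite leq_min geq_minl (leq_trans (geq_minr _ _)).
Qed.

Lemma leq_sum_uniq_nonincr (f : nat -> nat) (I : seq nat) n :
  {homo f : i j / i <= j >-> j <= i} -> uniq I -> size I <= n ->
  \sum_(i <- I) f i <= \sum_(k < n) f k.
Proof.
move=> f_nonincr I_uniq In; set s := sort leq I.
have s_ltn : sorted ltn s.
  by rewrite ltn_sorted_uniq_leq sort_uniq I_uniq sort_sorted //; apply: leq_total.
have s_ge k : k < size s -> k <= nth 0 s k.
  elim: k => // k IH ks; apply: leq_ltn_trans (IH (ltnW ks)) _.
  by apply: (sorted_ltn_nth ltn_trans) => //; rewrite inE ltnW.
rewrite -(perm_big _ (permEl (perm_sort leq I))) (big_nth 0) big_mkord.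
apply: (@leq_trans (\sum_(k < size s) f k)); last by apply: leq_sum_ord_widen; rewrite size_sort.
by apply: leq_sum => k _; apply/f_nonincr/s_ge.
Qed.

Lemma Dcard_le_dcyc_rec Q b t m x :
  all (fun a => a < Q) x -> size x = b * t + m -> Dcard t b x <= dcyc_rec Q m t.
Proof.
elim: m t x => [|m IH] t x xQ xs; first by rewrite Dcard_full // xs addn0.
have kb_le k : k <= t -> k * b <= b * t by rewrite mulnC leq_mul2l => ->; rewrite orbT.
rewrite Dcard_first_occ ?xs; last lia.
rewrite -big_filter; set I := filter _ _.
apply: (@leq_trans (\sum_(k <- I) dcyc_rec Q m (t - k))).
  rewrite !big_seq; apply: leq_sum => k; rewrite mem_filter mem_iota => /andP [_ /= kt].
  apply: IH; first by apply/allP => a /mem_drop; apply: (allP xQ).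
  by rewrite size_drop xs mulnBr [b * k]mulnC; have := kb_le k kt; lia.
rewrite dcyc_recS; apply: leq_sum_uniq_nonincr.
- by move=> i j ij; apply: dcyc_rec_homo; lia.
- exact/filter_uniq/iota_uniq.
rewrite leq_min; apply/andP; split.
  2: by rewrite size_filter (leq_trans (count_size _ _)) ?size_iota.
rewrite -(size_map (fun k => nth 0 x (k * b))) -(size_iota 0 Q).
apply: uniq_leq_size (uniq_first_occ _ _ _) _ => a /mapP [k].
rewrite mem_filter mem_iota => /andP [_ /= kt] ->; rewrite mem_iota /=.
by apply: (allP xQ); apply: mem_nth; rewrite xs addnS ltnS (leq_trans (kb_le k kt)) ?leq_addr.
Qed.

(* The b-cyclic word read from offset r < b inside its first block. *)
Definition Xcyc_off (Q b sigma r n : nat) : seq nat :=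
  mkseq (fun j => (sigma + (j + r) %/ b) %% Q) n.

Lemma Xcyc_off0 sigma n Q b : Xcyc sigma n Q b = Xcyc_off Q b sigma 0 n.
Proof. by apply: eq_mkseq => j; rewrite addn0. Qed.

Section CyclicOffset.

Variables (Q b : nat).
Hypothesis b_gt0 : 0 < b.

Lemma nth_Xcyc_off sigma r n k : r < b -> k * b < n ->
  nth 0 (Xcyc_off Q b sigma r n) (k * b) = (sigma + k) %% Q.
Proof. by move=> rb kbn; rewrite nth_mkseq // divnMDl // divn_small // addn0. Qed.

Lemma drop_Xcyc_off sigma r n k : r < b ->
  drop (k * b).+1 (Xcyc_off Q b sigma r n) =
  if r.+1 < b then Xcyc_off Q b (sigma + k) r.+1 (n - (k * b).+1)
  else Xcyc_off Q b (sigma + k).+1 0 (n - (k * b).+1).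
Proof.
move=> rb; apply: (@eq_from_nth _ 0) => [|j]; first by case: ifP; rewrite size_drop !size_mkseq.
rewrite size_drop size_mkseq => jn; rewrite nth_drop nth_mkseq; last by lia.
have -> : (k * b).+1 + j + r = k * b + (j + r.+1) by lia.
rewrite divnMDl //; case: ifP => rb'; rewrite nth_mkseq // ?addnA //.
have -> : r.+1 = b by lia.
by rewrite addn0 divnDr ?dvdnn // divnn b_gt0; congr (_ %% Q); lia.
Qed.

Lemma first_occ_Xcyc_off sigma r n k : 0 < Q -> r < b -> k * b < n ->
  first_occ (Xcyc_off Q b sigma r n) b k = (k < Q).
Proof.
move=> Q_gt0 rb kbn; rewrite /first_occ nth_Xcyc_off //.
have -> : [seq nth 0 (Xcyc_off Q b sigma r n) (j * b) | j <- iota 0 k] =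
          [seq (sigma + j) %% Q | j <- iota 0 k].
  apply/eq_in_map => j; rewrite mem_iota => /andP [_ jk]; apply: nth_Xcyc_off => //.
  by apply: leq_ltn_trans kbn; rewrite leq_mul2r ltnW ?orbT.
case: (ltnP k Q) => kQ.
  apply/mapP => -[j]; rewrite mem_iota => /andP [_ jk] /eqP.
  by rewrite eqn_modDl !modn_small //; lia.
apply/negPn/mapP; exists (k - Q); first by rewrite mem_iota; lia.
by rewrite -[in RHS](modnDr _ Q) -addnA subnK.
Qed.

Lemma Dcard_Xcyc_off t m sigma r : 0 < Q -> r < b ->
  Dcard t b (Xcyc_off Q b sigma r (b * t + m)) = dcyc_rec Q m t.
Proof.
move=> Q_gt0; elim: m t sigma r => [|m IH] t sigma r rb.
  by rewrite Dcard_full // size_mkseq addn0.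
rewrite Dcard_first_occ ?size_mkseq; last lia.
rewrite dcyc_recS (big_ord_widen t.+1 (fun k => dcyc_rec Q m (t - k)) (geq_minr Q t.+1)).
rewrite -[iota 0 t.+1]/(index_iota 0 t.+1).
rewrite big_mkord big_mkcond [RHS]big_mkcond; apply: eq_bigr => k _; have kt := ltn_ord k.
have bkt : b * k <= b * t := leq_mul (leqnn b) (kt : k <= t).
have kbn : k * b < b * t + m.+1 by rewrite mulnC (leq_ltn_trans bkt) // addnS ltnS leq_addr.
rewrite first_occ_Xcyc_off ?size_mkseq // leq_min kt andbT; case: ifP => // kQ.
rewrite drop_Xcyc_off //.
have -> : b * t + m.+1 - (k * b).+1 = b * (t - k) + m by rewrite mulnBr [k * b]mulnC; lia.
by case: ifP => ?; rewrite IH.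
Qed.

End CyclicOffset.

Lemma Dcard_Xcyc Q b t n sigma : 0 < Q -> 0 < b -> b * t <= n ->
  Dcard t b (Xcyc sigma n Q b) = dcyc_rec Q (n - b * t) t.
Proof. by move=> Q0 b0 btn; rewrite Xcyc_off0 -{1}(subnKC btn) Dcard_Xcyc_off. Qed.

Lemma Dmax_dcyc_rec q b n t : 0 < q -> 0 < b -> b * t <= n ->
  Dmax q b n t = dcyc_rec q (n - b * t) t.
Proof.
move=> q0 b0 btn; apply/eqP; rewrite eqn_leq; apply/andP; split.
  apply/bigmax_leqP => x _; apply: Dcard_le_dcyc_rec; last by rewrite size_map size_tuple subnKC.
  by apply/allP => _ /mapP [i _ ->].
pose f j := Ordinal (ltn_pmod (j %/ b) q0).
have fn : size (mkseq f n) == n by rewrite size_mkseq.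
apply: leq_trans (leq_bigmax (Tuple fn)); rewrite /= /mkseq -map_comp -(Dcard_Xcyc 0 q0 b0 btn).
exact: leqnn.
Qed.

Lemma exchange_big_triangle a s (F : nat -> nat -> nat) : a <= s.+1 ->
  \sum_(k < a) \sum_(i < (s - k).+1) F k i = \sum_(i < s.+1) \sum_(k < minn a (s - i).+1) F k i.
Proof.
move=> as1; rewrite (big_ord_widen _ (fun k => \sum_(i < (s - k).+1) F k i) as1).
under eq_bigr do rewrite (big_ord_widen s.+1 (F _) (leq_subr _ _ : (s - _).+1 <= s.+1)).
rewrite (exchange_big_dep xpredT) //=; apply: eq_bigr => i _.
rewrite (big_ord_widen s.+1 (F^~ i) (leq_trans (geq_minr _ _) (leq_subr _ _ : (s - i).+1 <= s.+1))).
apply: eq_bigl => k; rewrite leq_min; have := ltn_ord k; have := ltn_ord i; lia.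
Qed.

Lemma sum_binomial_dcyc_recS Q m s :
  \sum_(k < minn Q s.+1) \sum_(i < (s - k).+1) 'C(m, i) * dcyc_rec Q i (s - k - i) =
  \sum_(i < s.+1) 'C(m, i) * dcyc_rec Q i.+1 (s - i).
Proof.
rewrite (@exchange_big_triangle _ _ (fun k i => 'C(m, i) * dcyc_rec Q i (s - k - i))) ?geq_minr //.
apply: eq_bigr => i _.
rewrite dcyc_recS big_distrr -minnA (minn_idPr (leq_subr i s : (s - i).+1 <= s.+1)) /=.
by apply: eq_bigr => k _; rewrite subnAC.
Qed.

Lemma dcyc_rec_binomial Q m t :
  dcyc_rec Q.+1 m t = \sum_(i < t.+1) 'C(m, i) * dcyc_rec Q i (t - i).
Proof.
elim: m t => [|m IH] t; first by rewrite big_ord_recl big1 //= addn0.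
rewrite dcyc_recS; under eq_bigr do rewrite IH.
case: t => [|s]; first by rewrite !big_ord1 /= !bin0.
rewrite minnSS [LHS]big_ord_recl; under [X in _ + X]eq_bigr => k _ do rewrite lift0 subSS.
rewrite sum_binomial_dcyc_recS subn0 [in LHS]big_ord_recl [RHS]big_ord_recl !bin0.
under [in RHS]eq_bigr => i _ do rewrite lift0 subSS binS mulnDl.
under [in LHS]eq_bigr => i _ do rewrite lift0 subSS.
by rewrite big_split addnA.
Qed.

Lemma dcyc_rec1 m t : dcyc_rec 1 m t = 1.
Proof. by elim: m t => // m IH t; rewrite dcyc_recS minnSS min0n big_ord1 IH. Qed.

Lemma dcyc_dcyc_rec Q t i : 0 < Q -> i <= t -> dcyc Q 1 t (t - i) = dcyc_rec Q i (t - i).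
Proof.
move=> Q0 it; rewrite /dcyc mul1n ltnNge leq_subr /=.
case: eqP => [tti | _]; first by have -> : i = 0 by lia.
by rewrite Dcard_Xcyc ?mul1n ?subKn ?leq_subr.
Qed.

Theorem theorem4p6 (q t b n sigma : nat) :
  2 <= q -> 1 <= t -> 1 <= b -> b * t + 1 <= n -> sigma < q ->
  [/\ Dcard t b (Xcyc sigma n q b) = Dmax q b n t,
      Dmax q b n t = \sum_(0 <= i < t.+1) 'C(n - b * t, i) * dcyc q.-1 1 t (t - i)
    & Dmax 2 b n t = \sum_(0 <= i < t.+1) 'C(n - b * t, i)].
Proof.
move=> q2 _ b0 btn _; have q0 : 0 < q by lia.
have q1 : 0 < q.-1 by rewrite -subn1 subn_gt0.
have {}btn : b * t <= n by lia.
split.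
- by rewrite Dmax_dcyc_rec // Dcard_Xcyc.
- rewrite Dmax_dcyc_rec // -{1}(prednK q0) dcyc_rec_binomial big_mkord.
  by apply: eq_bigr => i _; rewrite dcyc_dcyc_rec // -ltnS ltn_ord.
- rewrite Dmax_dcyc_rec // dcyc_rec_binomial big_mkord.
  by apply: eq_bigr => i _; rewrite dcyc_rec1 muln1.
Qed.
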